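(* Let $m\ge5$ be odd and $h=\frac{m-1}{2}$. For every $j\in\Gamma_{(h)}$: (i) if $j\neq1$, then $j+2^{h+1}$ is the coset leader of $C_{j+2^{h+1}}$, and the coset leader of $C_{1+2^{h+1}}$ is $1+2^h$; (ii) $|C_{j+2^{h+1}}|=m$.
   Context: Let $v=2^m-1$. For an integer $i$, $C_i=\{i\cdot 2^s \bmod v: s\ge 0\}$ is the $2$-cyclotomic coset of $i$ modulo $v$, and its least element is its coset leader. For a positive integer $t$, $\Gamma_{(t)}=\{j:1\le j\le 2^t-1,\ j\text{ odd}\}$. *)

From mathcomp Require Import all_boot.
Set Implicit Arguments. Unset Strict Implicit. Unset Printing Implicit Defensive.

Definition cyc_mod (m : nat) : nat := 2 ^ m - 1.

Definition in_coset (m i x : nat) : Prop :=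
  exists s : nat, x = (i * 2 ^ s) %% cyc_mod m.

Definition coset_leader (m i l : nat) : Prop :=
  in_coset m i l /\ forall x, in_coset m i x -> l <= x.

Definition coset_card (m i n : nat) : Prop :=
  exists s : seq nat,
    [/\ uniq s, size s = n & forall x, x \in s <-> in_coset m i x].

Definition Gamma (t : nat) : pred nat :=
  fun j => [&& odd j, 1 <= j & j <= 2 ^ t - 1].

(* Multiplication by 2 modulo 2^m - 1 rotates the m-bit binary expansion of a
   number.  With m = 2h + 1 and k = j + 2^(h+1), j odd and j < 2^h, the word
   of k is 0...0 1 0 [j], and its rotations are: k * 2^s for s < h (no wrap
   around); 1 + j * 2^h for s = h, where the top bit wraps to position 0;
   2 + j * 2^(h+1) for s = h + 1, which is even; and for larger s the odd
   number k leaves a nonzero bit at position >= s, so the value is at least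
   2^(h+2) > k.  Hence the least rotation is k when j >= 3 and 1 + 2^h when
   j = 1, and no nontrivial rotation fixes k, so the coset has m elements. *)

From mathcomp Require Import all_boot zify.

Definition coset_elt (m k s : nat) : nat := (k * 2 ^ s) %% cyc_mod m.

Lemma coset_elt_modm m k s : coset_elt m k s = coset_elt m k (s %% m).
Proof.
rewrite /coset_elt /cyc_mod {1}(divn_eq s m) expnD (mulnC _ m) expnM mulnCA.
have exp2m_mod : 2 ^ m = 1 %[mod 2 ^ m - 1].
  by rewrite -{1}(@subnKC 1 (2 ^ m)) ?expn_gt0 // modnDr.
by rewrite -modnMml -modnXm exp2m_mod modnXm exp1n modnMml mul1n.
Qed.

Lemma coset_eltD m k s t :
  coset_elt m (coset_elt m k s) t = coset_elt m k (s + t).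
Proof. by rewrite /coset_elt modnMml -mulnA -expnD. Qed.

Lemma coset_elt0 m k : k < cyc_mod m -> coset_elt m k 0 = k.
Proof. by move=> kv; rewrite /coset_elt muln1 modn_small. Qed.

(* Rotation by s of the m-bit word with high part q (s bits) and low part r. *)
Lemma coset_elt_rot m s q r :
  s <= m -> q < 2 ^ s -> r < 2 ^ (m - s) -> q * 2 ^ (m - s) + r < cyc_mod m ->
  coset_elt m (q * 2 ^ (m - s) + r) s = q + r * 2 ^ s.
Proof.
rewrite /coset_elt /cyc_mod => sm; rewrite -(subnKC sm) expnD addKn.
set P := 2 ^ s; set Q := 2 ^ (m - s) => qP rQ kv.
have P1 : 0 < P by rewrite expn_gt0.
have -> : (q * Q + r) * P = q * (P * Q - 1) + (q + r * P) by nia.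
by rewrite modnMDl modn_small //; nia.
Qed.

Lemma coset_elt_ge_exp2 m k s :
  odd k -> k < cyc_mod m -> s < m -> 2 ^ s <= coset_elt m k s.
Proof.
move=> k_odd kv sm; set Q := 2 ^ (m - s).
have Q0 : 0 < Q by rewrite expn_gt0.
have r_pos : 0 < k %% Q.
  rewrite lt0n; apply: contraL k_odd; rewrite -/(Q %| k) -dvdn2 => Qk.
  by apply: dvdn_trans Qk; rewrite /Q -{1}(expn1 2); apply: dvdn_exp2l; rewrite subn_gt0.
have q_lt : k %/ Q < 2 ^ s.
  rewrite (ltn_divLR _ _ Q0) /Q -expnD subnKC; last exact: ltnW.
  by apply: leq_trans kv _; exact: leq_subr.
have := @coset_elt_rot m s _ _ (ltnW sm) q_lt (ltn_pmod k Q0).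
rewrite -divn_eq => /(_ kv) ->.
by apply: leq_trans (leq_addl _ _); rewrite leq_pmull.
Qed.

Lemma coset_card_full m k :
  k < cyc_mod m -> (forall s, 0 < s < m -> coset_elt m k s != k) ->
  coset_card m k m.
Proof.
move=> kv no_period.
have m0 : 0 < m by apply: contraLR kv; rewrite -eqn0Ngt => /eqP->.
have elt_inj s t : s < t < m -> coset_elt m k s != coset_elt m k t.
  case/andP=> st tm; apply: contra (no_period (s + (m - t)) _); last by lia.
  move/eqP=> e; rewrite -coset_eltD e coset_eltD subnKC; last exact: ltnW.
  by rewrite coset_elt_modm modnn coset_elt0.
exists [seq coset_elt m k s | s <- iota 0 m]; split.
- rewrite map_inj_in_uniq ?iota_uniq // => s t; rewrite !mem_iota !add0n => sm tm.
  case: (ltngtP s t) => // [st|ts] /eqP.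
    by rewrite (negPf (elt_inj s t _)) // st.
  by rewrite eq_sym (negPf (elt_inj t s _)) // ts.
- by rewrite size_map size_iota.
- move=> x; split; first by case/mapP=> s _ ->; exists s.
  case=> s ->; rewrite -/(coset_elt m k s) coset_elt_modm.
  by apply: map_f; rewrite mem_iota ltn_pmod.
Qed.

Section HalfShift.

Variables h j : nat.
Hypotheses (j_odd : odd j) (j_lt : j < 2 ^ h).

Let m := h.*2.+1.
Let k := j + 2 ^ h.+1.

Let P := 2 ^ h.

Let exp2m : 2 ^ m = 2 * P * P.
Proof. by rewrite /m /P expnS -addnn expnD mulnA. Qed.

Let P2 : 1 < P.
Proof. by case: j j_odd j_lt => // j' _; apply: leq_ltn_trans. Qed.

Let kP : k = j + 2 * P.
Proof. by rewrite /k expnS. Qed.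

Let k_lt_cyc : k < cyc_mod m.
Proof. rewrite /cyc_mod exp2m kP; nia. Qed.

Let k_odd : odd k.
Proof. by rewrite /k oddD j_odd oddX. Qed.

Let k_lt_exp : k < 2 ^ h.+2.
Proof. by rewrite !expnS -/P kP; lia. Qed.

Lemma coset_elt_lt_half s : s < h -> coset_elt m k s = k * 2 ^ s.
Proof.
move=> sh; have sm : s <= m by rewrite /m; lia.
have k_lt : k < 2 ^ (m - s).
  by apply: leq_trans k_lt_exp _; rewrite leq_exp2l // /m; lia.
have := @coset_elt_rot m s 0 k sm (expn_gt0 2 s) k_lt.
by rewrite mul0n add0n => /(_ k_lt_cyc).
Qed.

Lemma coset_elt_half : coset_elt m k h = 1 + j * 2 ^ h.
Proof.
have hm : h <= m by rewrite /m; lia.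
have mh : m - h = h.+1 by rewrite /m; lia.
have j_lt' : j < 2 ^ (m - h) by rewrite mh expnS; lia.
have := @coset_elt_rot m h 1 j hm P2 j_lt'.
by rewrite mh mul1n addnC -/k => /(_ k_lt_cyc).
Qed.

Lemma coset_elt_half_succ : coset_elt m k h.+1 = 2 + j * 2 ^ h.+1.
Proof.
have hm : h.+1 <= m by rewrite /m; lia.
have mh : m - h.+1 = h by rewrite /m; lia.
have two_lt : 2 < 2 ^ h.+1 by rewrite expnS; lia.
have := @coset_elt_rot m h.+1 2 j hm two_lt.
by rewrite mh -expnS addnC -/k => /(_ j_lt k_lt_cyc).
Qed.

Lemma coset_elt_gt_half_succ s : h.+1 < s < m -> k < coset_elt m k s.
Proof.
case/andP=> hs sm.
apply: leq_trans (coset_elt_ge_exp2 _ _ _ k_odd k_lt_cyc sm).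
by apply: leq_trans k_lt_exp _; rewrite leq_exp2l.
Qed.

Lemma coset_elt_ge_min s : minn k (1 + j * 2 ^ h) <= coset_elt m k s.
Proof.
rewrite coset_elt_modm; have : s %% m < m by rewrite ltn_pmod.
move: (s %% m) => d dm.
have [dh|] := ltnP d h.
  by rewrite coset_elt_lt_half // geq_min leq_pmulr ?expn_gt0.
rewrite leq_eqVlt => /predU1P[<-|hd]; first by rewrite coset_elt_half geq_min leqnn orbT.
move: hd; rewrite leq_eqVlt => /predU1P[<-|hd].
  by rewrite coset_elt_half_succ geq_min expnS -/P; apply/orP; right; nia.
by rewrite geq_min ltnW ?coset_elt_gt_half_succ ?hd.
Qed.

Lemma half_shift_lt_rotation : j != 1 -> k < 1 + j * 2 ^ h.
Proof.
move=> j_ne1; have j3 : 3 <= j by case: j j_odd j_ne1 => [|[|[|]]].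
have : 3 * P <= j * P by rewrite leq_mul2r j3 orbT.
rewrite kP; lia.
Qed.

Lemma coset_elt_neq s : 0 < s < m -> coset_elt m k s != k.
Proof.
case/andP=> s0 sm; have [sh|] := ltnP s h.
  rewrite coset_elt_lt_half // gtn_eqF // -{1}[k]muln1 ltn_mul2l.
  by rewrite (@ltn_exp2l 2 0) // s0 kP; lia.
rewrite leq_eqVlt => /predU1P[<-|hs].
  rewrite coset_elt_half; have [j1|j_ne1] := eqVneq j 1.
    by rewrite kP j1 -/P; lia.
  by rewrite gtn_eqF // half_shift_lt_rotation.
move: hs; rewrite leq_eqVlt => /predU1P[<-|hs].
  rewrite coset_elt_half_succ; apply: contraTneq k_odd => <-.
  by rewrite oddD oddM oddX /= andbF.
by rewrite gtn_eqF // coset_elt_gt_half_succ // hs.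
Qed.

Lemma coset_leader_half_shift : coset_leader m k (minn k (1 + j * 2 ^ h)).
Proof.
split; last by move=> _ [s ->]; apply: coset_elt_ge_min.
rewrite /minn; case: ltnP => _; first by exists 0; rewrite -/(coset_elt m k 0) coset_elt0.
by exists h; rewrite -/(coset_elt m k h) coset_elt_half.
Qed.

Lemma coset_card_half_shift : coset_card m k m.
Proof. exact: coset_card_full k_lt_cyc coset_elt_neq. Qed.

End HalfShift.

Theorem lemma9 (m : nat) (Hm : 5 <= m) (Hodd : odd m) (j : nat)
  (Hj : Gamma ((m - 1) %/ 2) j) :
  let h := (m - 1) %/ 2 in
  [/\ (j != 1 -> coset_leader m (j + 2 ^ h.+1) (j + 2 ^ h.+1)),
      coset_leader m (1 + 2 ^ h.+1) (1 + 2 ^ h)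
    & coset_card m (j + 2 ^ h.+1) m].
Proof.
move=> h; rewrite -/h in Hj; have Em : m = h.*2.+1 by rewrite /h; lia.
clearbody h; subst m; case/and3P: Hj => j_odd j_pos j_le.
have j_lt : j < 2 ^ h by have := expn_gt0 2 h; lia.
have one_lt : 1 < 2 ^ h by apply: leq_ltn_trans j_lt.
split.
- move=> j_ne1; have := coset_leader_half_shift _ _ j_odd j_lt.
  by rewrite (minn_idPl (ltnW (half_shift_lt_rotation _ _ j_odd j_lt j_ne1))).
- have := coset_leader_half_shift h 1 isT one_lt.
  by rewrite mul1n (minn_idPr _) // expnS; lia.
- exact: coset_card_half_shift _ _ j_odd j_lt.
Qed.
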